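(* Let $\mathbb{K}$ be a field of characteristic $0$ and let $G$ be a subgroup of the symmetric group $\Sigma_3$. Let $(A,\mu)$ be a $G$-associative algebra over $\mathbb{K}$ and let $\alpha \colon A \to A$ be a linear map such that $\alpha \circ \mu = \mu \circ \alpha^{\otimes 2}$. Then $(A,\mu_\alpha = \alpha \circ \mu,\alpha)$ is a $G$-Hom-associative algebra. Moreover, $\alpha$ is multiplicative with respect to $\mu_\alpha$, i.e., $\alpha \circ \mu_\alpha = \mu_\alpha \circ \alpha^{\otimes 2}$. Suppose further that $(B,\mu')$ is another $G$-associative algebra and that $\alpha' \colon B \to B$ is a linear map such that $\alpha' \circ \mu' = \mu' \circ \alpha'^{\otimes 2}$. If $f \colon A \to B$ is a linear map with $f \circ \mu = \mu' \circ f^{\otimes 2}$ and $f \circ \alpha = \alpha' \circ f$, then $f \colon (A,\mu_\alpha,\alpha) \to (B,\mu'_{\alpha'} = \alpha' \circ \mu',\alpha')$ is a morphism of $G$-Hom-associative algebras.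
   Context: All vector spaces and (multi)linear maps are over a fixed field $\mathbb{K}$ of characteristic $0$. For $G \subseteq \Sigma_3$ a subgroup, a $G$-Hom-associative algebra is a triple $(A,\mu,\alpha)$ with $A$ a vector space, $\mu \colon A \otimes A \to A$ bilinear (written $\mu(x,y) = xy$) and $\alpha \colon A \to A$ linear (not required to be multiplicative), such that for all $x_1,x_2,x_3 \in A$: $$\sum_{\sigma \in G} (-1)^{\varepsilon(\sigma)} \left\{(x_{\sigma(1)}x_{\sigma(2)})\alpha(x_{\sigma(3)}) - \alpha(x_{\sigma(1)})(x_{\sigma(2)}x_{\sigma(3)})\right\} = 0,$$ where $\varepsilon(\sigma)$ denotes the signature of $\sigma$. A $G$-associative algebra is a (not necessarily associative) algebra $(A,\mu)$ satisfying this identity with $\alpha = \mathrm{Id}_A$. A morphism $f \colon (A,\mu_A,\alpha_A) \to (B,\mu_B,\alpha_B)$ of $G$-Hom-associative algebras is a linear map $f \colon A \to B$ with $f \circ \alpha_A = \alpha_B \circ f$ and $f \circ \mu_A = \mu_B \circ f^{\otimes 2}$. *)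

From HB Require Import structures.
From mathcomp Require Import all_boot all_order all_algebra all_fingroup.
Set Implicit Arguments. Unset Strict Implicit. Unset Printing Implicit Defensive.
Import GRing.Theory.
Local Open Scope ring_scope.

Definition bilinear_mul (K : fieldType) (V : lmodType K) (mu : V -> V -> V) : Prop :=
  (forall y, linear (mu^~ y)) /\ (forall x, linear (mu x)).

(* The G-Hom-associativity identity, for G a subgroup of Sigma_3 = 'S_3
   (acting on the indices {0,1,2} = {1,2,3}). *)
Definition GHomAssoc (K : fieldType) (V : lmodType K) (G : {group 'S_3})
    (mu : V -> V -> V) (alpha : V -> V) : Prop :=
  forall x : 'I_3 -> V,
    \sum_(s in G) (-1) ^+ odd_perm s *:
      (mu (mu (x (s 0)) (x (s 1))) (alpha (x (s 2)))
       - mu (alpha (x (s 0))) (mu (x (s 1)) (x (s 2)))) = 0.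

Definition is_GHomAssocAlg (K : fieldType) (V : lmodType K) (G : {group 'S_3})
    (mu : V -> V -> V) (alpha : V -> V) : Prop :=
  [/\ bilinear_mul mu, linear alpha & GHomAssoc G mu alpha].

Definition is_GAssocAlg (K : fieldType) (V : lmodType K) (G : {group 'S_3})
    (mu : V -> V -> V) : Prop :=
  bilinear_mul mu /\ GHomAssoc G mu id.

Definition is_GHomAssoc_morphism (K : fieldType) (V W : lmodType K)
    (alphaV : V -> V) (muV : V -> V -> V) (alphaW : W -> W) (muW : W -> W -> W)
    (f : V -> W) : Prop :=
  [/\ linear f,
      (forall x, f (alphaV x) = alphaW (f x)) &
      (forall x y, f (muV x y) = muW (f x) (f y))].

From HB Require Import structures.
From mathcomp Require Import all_boot all_order all_algebra all_fingroup.
Import GRing.Theory.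
Local Open Scope ring_scope.

(* Yau twisting: for a multiplicative alpha, every associator-type term of
   mu_alpha = alpha \o mu is alpha^2 applied to the corresponding term of mu,
   so the G-symmetrised associator of mu_alpha is alpha^2 of that of mu, which
   vanishes. *)

Section YauTwist.

Variables (K : fieldType) (A : lmodType K) (mu : A -> A -> A) (alpha : A -> A).
Hypothesis alpha_linear : linear alpha.
Hypothesis alpha_mul : forall x y, alpha (mu x y) = mu (alpha x) (alpha y).

HB.instance Definition _ := GRing.isLinear.Build K A A _ alpha alpha_linear.

Let mu_alpha x y := alpha (mu x y).

Lemma bilinear_mul_twist : bilinear_mul mu -> bilinear_mul mu_alpha.
Proof.
by case=> mul_linl mul_linr; split=> [y | x] a u v;
  rewrite /mu_alpha ?mul_linl ?mul_linr linearP.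
Qed.

Lemma twist_mul_morph x y : alpha (mu_alpha x y) = mu_alpha (alpha x) (alpha y).
Proof. by rewrite /mu_alpha alpha_mul. Qed.

Lemma twist_assocE x y z :
  mu_alpha (mu_alpha x y) (alpha z) - mu_alpha (alpha x) (mu_alpha y z)
  = alpha (alpha (mu (mu x y) z - mu x (mu y z))).
Proof. by rewrite /mu_alpha !linearB /= !alpha_mul. Qed.

Lemma GHomAssoc_twist (G : {group 'S_3}) :
  GHomAssoc G mu id -> GHomAssoc G mu_alpha alpha.
Proof.
move=> assoc x; transitivity (alpha (alpha (\sum_(s in G) (-1) ^+ odd_perm s *:
    (mu (mu (x (s 0)) (x (s 1))) (x (s 2))
     - mu (x (s 0)) (mu (x (s 1)) (x (s 2))))))).
  by rewrite !linear_sum; apply: eq_bigr => s _; rewrite !linearZ twist_assocE.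
by rewrite (assoc x) !linear0.
Qed.

End YauTwist.

Lemma GHomAssoc_morphism_twist (K : fieldType) (A B : lmodType K)
    (mu : A -> A -> A) (alpha : A -> A) (mu' : B -> B -> B) (alpha' : B -> B)
    (f : A -> B) :
  linear f -> (forall x y, f (mu x y) = mu' (f x) (f y)) ->
  (forall x, f (alpha x) = alpha' (f x)) ->
  is_GHomAssoc_morphism alpha (fun x y => alpha (mu x y))
                        alpha' (fun x y => alpha' (mu' x y)) f.
Proof. by move=> f_linear f_mul f_alpha; split=> // x y; rewrite f_alpha f_mul. Qed.

Theorem theorem2p1 (K : fieldType) (hchar : [pchar K] =i pred0)
    (G : {group 'S_3})
    (A : lmodType K) (mu : A -> A -> A) (alpha : A -> A)
    (B : lmodType K) (mu' : B -> B -> B) (alpha' : B -> B) :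
  is_GAssocAlg G mu -> linear alpha ->
  (forall x y, alpha (mu x y) = mu (alpha x) (alpha y)) ->
  [/\ is_GHomAssocAlg G (fun x y => alpha (mu x y)) alpha,
      (forall x y, alpha (alpha (mu x y)) = alpha (mu (alpha x) (alpha y))) &
      (is_GAssocAlg G mu' -> linear alpha' ->
       (forall x y, alpha' (mu' x y) = mu' (alpha' x) (alpha' y)) ->
       forall f : A -> B, linear f ->
       (forall x y, f (mu x y) = mu' (f x) (f y)) ->
       (forall x, f (alpha x) = alpha' (f x)) ->
       is_GHomAssoc_morphism alpha (fun x y => alpha (mu x y))
                             alpha' (fun x y => alpha' (mu' x y)) f)].
Proof.
move=> [mu_bilinear mu_assoc] alpha_linear alpha_mul; split.
- split=> //; first exact: bilinear_mul_twist.
  exact: GHomAssoc_twist.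
- exact: twist_mul_morph.
- by move=> _ _ _ f; apply: GHomAssoc_morphism_twist.
Qed.
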